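(* Let $\rho=|\psi\rangle\langle\psi|$ be an $n$-qubit pure state and $S\subseteq[n]$ non-empty with $s=|S|$. Let $\{|\tilde\phi_j\rangle\langle\tilde\phi_j|\}_{j=1}^4$ be a single-qubit SIC-POVM, and for $\mathbf{q}\in\{1,2,3,4\}^s$ let $|\tilde\Phi_{\mathbf{q}}\rangle\langle\tilde\Phi_{\mathbf{q}}|=\bigotimes_{i\in S}|\tilde\phi_{q_i}\rangle\langle\tilde\phi_{q_i}|$ (identity on qubits outside $S$), so that measuring the local SIC-POVM on the qubits of $S$ yields outcome $\mathbf{q}$ with probability $P(\mathbf{q})=\operatorname{tr}(\rho|\tilde\Phi_{\mathbf{q}}\rangle\langle\tilde\Phi_{\mathbf{q}}|)$. Then $$\mathcal{C}_{|\psi\rangle}(S)=1-3^s\sum_{\mathbf{q}\in\{1,2,3,4\}^s}P(\mathbf{q})^2.$$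
   Context: $[n]=\{1,\dots,n\}$ labels the qubits. For an $n$-qubit pure state $|\psi\rangle$ and a non-empty $S\subseteq[n]$ with $s=|S|$, the concentratable entanglement is $\mathcal{C}_{|\psi\rangle}(S)=1-\frac{1}{2^s}\sum_{\alpha\subseteq S}\operatorname{tr}(\rho_\alpha^2)$, where $\rho_\alpha$ is the reduced state of $|\psi\rangle\langle\psi|$ on the qubits in $\alpha$, and $\operatorname{tr}(\rho_\emptyset^2):=1$. A single-qubit SIC-POVM consists of $|\tilde\phi_j\rangle=\frac{1}{\sqrt2}|\phi_j\rangle$, $j=1,\dots,4$, where $|\phi_j\rangle$ are unit vectors in $\mathbb{C}^2$ with $|\langle\phi_j|\phi_k\rangle|^2=1/3$ for $j\ne k$, so that $\sum_j|\tilde\phi_j\rangle\langle\tilde\phi_j|=\mathbb{I}$; e.g. $|\phi_1\rangle=|0\rangle$, $|\phi_{k}\rangle=\frac{1}{\sqrt3}|0\rangle+\sqrt{\frac23}e^{i2\pi(k-2)/3}|1\rangle$ for $k=2,3,4$. *)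

(* Complex scalars: an arbitrary numClosedFieldType C
   (e.g. algC, or complex R for a real closed field R). *)
From HB Require Import structures.
From mathcomp Require Import all_boot all_order all_algebra.
Set Implicit Arguments. Unset Strict Implicit. Unset Printing Implicit Defensive.
Import Order.TTheory GRing.Theory Num.Theory.
Local Open Scope ring_scope.

(* Computational basis of n qubits: bit strings x : 'I_n -> bool.
   A state vector psi assigns an amplitude to each basis string. *)
Notation bits n := {ffun 'I_n -> bool}.
Notation bitsIn A := {ffun {i : 'I_ _ | i \in A} -> bool}.
Notation bitsOut A := {ffun {i : 'I_ _ | i \notin A} -> bool}.

Section QDefs.
Variable C : numClosedFieldType.
Variable n : nat.

Definition normalized (psi : bits n -> C) : Prop :=
  \sum_(x : bits n) psi x * (psi x)^* = 1.

Definition glue (A : {set 'I_n}) (a : bitsIn A) (c : bitsOut A) : bits n :=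
  [ffun i => match boolP (i \in A) with
             | AltTrue h => a (exist _ i h)
             | AltFalse h => c (exist _ i h)
             end].

(* reduced state rho_A = tr_{[n]\A} |psi><psi|, matrix entries <a|rho_A|b> *)
Definition reduced (psi : bits n -> C) (A : {set 'I_n}) (a b : bitsIn A) : C :=
  \sum_(c : bitsOut A) psi (glue a c) * (psi (glue b c))^*.

(* purity tr(rho_A^2), with tr(rho_empty^2) := 1 *)
Definition purity (psi : bits n -> C) (A : {set 'I_n}) : C :=
  if A == set0 then 1
  else \sum_(a : bitsIn A) \sum_(b : bitsIn A) reduced psi a b * reduced psi b a.

Definition conc_ent (psi : bits n -> C) (S : {set 'I_n}) : C :=
  1 - ((2 ^+ #|S|)%:R)^-1 * \sum_(A in powerset S) purity psi A.

(* single-qubit vectors: index false = |0>, true = |1> *)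
Definition qinner (u v : bool -> C) : C := \sum_(b : bool) (u b)^* * v b.

Definition is_SIC (phi : 'I_4 -> bool -> C) : Prop :=
  (forall j, qinner (phi j) (phi j) = 1) /\
  (forall j k, j != k ->
     qinner (phi j) (phi k) * (qinner (phi j) (phi k))^* = 3%:R^-1).

Definition tphi (phi : 'I_4 -> bool -> C) (j : 'I_4) (b : bool) : C :=
  phi j b / sqrtC 2%:R.

(* matrix entries <x| (tensor_{i in S} |tphi_{q_i}><tphi_{q_i}|) (x) I |y> *)
Definition sic_op (phi : 'I_4 -> bool -> C) (S : {set 'I_n})
  (q : {ffun {i : 'I_n | i \in S} -> 'I_4}) (x y : bits n) : C :=
  (\prod_(i : {i : 'I_n | i \in S})
      (tphi phi (q i) (x (val i)) * (tphi phi (q i) (y (val i)))^*)) *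
  (\prod_(i : 'I_n | i \notin S) (x i == y i)%:R).

(* P(q) = tr(|psi><psi| Phi_q) = sum_{x,y} <y|rho|x> <x|Phi_q|y> *)
Definition sic_prob (psi : bits n -> C) (phi : 'I_4 -> bool -> C)
  (S : {set 'I_n}) (q : {ffun {i : 'I_n | i \in S} -> 'I_4}) : C :=
  \sum_(x : bits n) \sum_(y : bits n) (psi y * (psi x)^*) * sic_op phi q x y.

End QDefs.

From HB Require Import structures.
From mathcomp Require Import all_boot all_order all_algebra ring.
Set Implicit Arguments. Unset Strict Implicit. Unset Printing Implicit Defensive.
Import Order.TTheory GRing.Theory Num.Theory.
Local Open Scope ring_scope.

(* A qubit SIC-POVM is a 2-design: since the Gram matrix of the four projectors
   |phi_k><phi_k| is invertible they span all 2x2 matrices, and inverting it gives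
   sum_k |tphi_k><tphi_k| (x) |tphi_k><tphi_k| = (I + SWAP) / 6.  Hence
   sum_q P(q)^2 = tr((rho (x) rho) K) with K the tensor product over i in S of
   (I + SWAP_i) / 6; expanding that product over the subsets A of S gives
   6^-s sum_A tr((rho (x) rho) SWAP_A) = 6^-s sum_A tr(rho_A^2) by the swap trick,
   and 3^s 6^-s = 2^-s. *)

Lemma prodr_natb (R : comPzSemiRingType) (I : finType) (b : I -> bool) :
  \prod_i (b i)%:R = [forall i, b i]%:R :> R.
Proof.
case: (boolP [forall i, b i]) => [/forallP allb | /forallPn[i nbi]].
  by rewrite big1 // => i _; rewrite allb.
by rewrite (bigD1 i) //= (negbTE nbi) mul0r.
Qed.

Lemma prodD_powerset (R : comPzSemiRingType) (I : finType) (S : {set I})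
    (a b : I -> R) :
  \prod_(i in S) (a i + b i) * \prod_(i | i \notin S) b i =
  \sum_(A in powerset S) \prod_i (if i \in A then a i else b i).
Proof.
pose a' i := if i \in S then a i else 0.
have -> : \prod_(i in S) (a i + b i) * \prod_(i | i \notin S) b i =
    \prod_i \sum_(t : bool) (if t then a' i else b i).
  rewrite [RHS](bigID (mem S)) /=; congr (_ * _); apply: eq_bigr => i iS.
  - by rewrite big_bool /a' /= iS.
  - by rewrite big_bool /a' /= (negbTE iS) add0r.
rewrite bigA_distr_bigA /=.
rewrite (reindex (fun A : {set I} => [ffun i => i \in A])) /=; last first.
  exists (fun f : {ffun I -> bool} => [set i | f i]) => [A _|f _].
    by apply/setP => i; rewrite inE ffunE.
  by apply/ffunP => i; rewrite ffunE inE.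
rewrite (bigID (mem (powerset S))) /= [X in _ + X]big1 ?addr0 => [|A].
  apply: eq_bigr => A; rewrite powersetE => /subsetP AS.
  by apply: eq_bigr => i _; rewrite ffunE /a'; case: ifPn => // /AS ->.
rewrite powersetE => /subsetPn[i iA niS].
by rewrite (bigD1 i) //= ffunE iA /a' (negbTE niS) mul0r.
Qed.

Definition bit_hi (e : 'I_4) : bool := (2 <= e)%N.
Definition bit_lo (e : 'I_4) : bool := odd e.

Lemma bits_ord_subproof (a b : bool) : (a.*2 + b < 4)%N.
Proof. by case: a; case: b. Qed.

Definition bits_ord (a b : bool) : 'I_4 := Ordinal (bits_ord_subproof a b).

Lemma bit_hi_ord a b : bit_hi (bits_ord a b) = a. Proof. by case: a; case: b. Qed.
Lemma bit_lo_ord a b : bit_lo (bits_ord a b) = b. Proof. by case: a; case: b. Qed.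

Lemma bits_ord_eq a b a' b' :
  (bits_ord a b == bits_ord a' b') = (a == a') && (b == b').
Proof. by case: a; case: b; case: a'; case: b'. Qed.

Lemma sum_ord4 (R : nmodType) (g : bool -> bool -> R) :
  \sum_(e < 4) g (bit_hi e) (bit_lo e) = \sum_(a : bool) \sum_(b : bool) g a b.
Proof.
rewrite !big_ord_recl big_ord0 !big_bool /bit_hi /bit_lo /= addr0.
by rewrite [in RHS]addrC [g true true + _]addrC [g false true + _]addrC -!addrA.
Qed.

Section SIC.
Variables (C : numClosedFieldType) (phi : 'I_4 -> bool -> C).
Hypothesis sic : is_SIC phi.

Definition sic_proj k a b : C := phi k a * (phi k b)^*.

Definition sic_frame : 'M[C]_4 :=
  \matrix_(e, k) sic_proj k (bit_hi e) (bit_lo e).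

Definition sic_frame_adj : 'M[C]_4 :=
  \matrix_(k, e) (sic_proj k (bit_hi e) (bit_lo e))^*.

Definition sic_gram : 'M[C]_4 := \matrix_(k, l) (if k == l then 1 else 3%:R^-1).

Definition sic_gram_inv : 'M[C]_4 :=
  \matrix_(k, l) (3%:R / 2%:R * (k == l)%:R - 4%:R^-1).

Lemma sic_frame_gram : sic_frame_adj *m sic_frame = sic_gram.
Proof.
apply/matrixP => k l; rewrite !mxE.
under eq_bigr => e _ do rewrite !mxE /sic_proj rmorphM /= conjCK.
rewrite (sum_ord4 (fun a b => (phi k a)^* * phi k b * (phi l a * (phi l b)^*))).
have -> : \sum_a \sum_b (phi k a)^* * phi k b * (phi l a * (phi l b)^*) =
    qinner (phi k) (phi l) * (qinner (phi k) (phi l))^*.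
  by rewrite /qinner !big_bool /= rmorphD !rmorphM /= !conjCK; ring.
case: eqVneq => [->|kl]; last exact: sic.2.
by rewrite sic.1 conjC1 mulr1.
Qed.

Lemma sic_gramV : sic_gram *m sic_gram_inv = 1%:M.
Proof.
apply/matrixP => k l; rewrite !mxE !big_ord_recl big_ord0 !mxE.
by case: k => [[|[|[|[|k]]]] Hk] //; case: l => [[|[|[|[|l]]]] Hl] //=;
  rewrite /eq_op /= /bump /=; field; rewrite ?pnatr_eq0.
Qed.

Lemma mul_sic_gram_inv (g : 'I_4 -> C) k :
  \sum_l g l * sic_gram_inv l k = 3%:R / 2%:R * g k - 4%:R^-1 * \sum_l g l.
Proof.
rewrite (eq_bigr (fun l => 3%:R / 2%:R * (g l * (l == k)%:R) - 4%:R^-1 * g l));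
  last by move=> l _; rewrite mxE; ring.
rewrite sumrB -!mulr_sumr (bigD1 k) //= eqxx mulr1 big1 ?addr0 // => l.
by rewrite eq_sym => /negbTE ->; rewrite mulr0.
Qed.

(* Since their Gram matrix is invertible, the four projectors are a basis of
   2x2 matrices; this is the corresponding resolution of the identity. *)
Lemma sic_resolution a b a' b' :
  \sum_k (3%:R / 2%:R * sic_proj k a b - 4%:R^-1 * \sum_l sic_proj l a b) *
     (sic_proj k a' b')^* = ((a == a') && (b == b'))%:R.
Proof.
have : sic_frame *m sic_gram_inv *m sic_frame_adj = 1%:M.
  by apply: mulmx1C; rewrite mulmxA sic_frame_gram sic_gramV.
move/matrixP/(_ (bits_ord a b) (bits_ord a' b')); rewrite !mxE bits_ord_eq => <-.
apply: eq_bigr => k _; rewrite mxE mul_sic_gram_inv !mxE !bit_hi_ord !bit_lo_ord.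
by under [X in _ = (_ - _ * X) * _]eq_bigr => l _ do rewrite mxE bit_hi_ord bit_lo_ord.
Qed.

Lemma sic_sum_proj a b : \sum_k sic_proj k a b = 2%:R * (a == b)%:R.
Proof.
have trace1 k : \sum_c (sic_proj k c c)^* = 1.
  rewrite -(sic.1 k) /qinner; apply: eq_bigr => c _.
  by rewrite /sic_proj rmorphM /= conjCK mulrC.
have : \sum_c ((a == c) && (b == c))%:R = 2%:R^-1 * \sum_k sic_proj k a b :> C.
  rewrite -(eq_bigr _ (fun c _ => sic_resolution a b c c)) exchange_big /=.
  under eq_bigr => k _ do rewrite -mulr_sumr trace1 mulr1.
  rewrite sumrB -mulr_sumr sumr_const card_ord -mulr_natr.
  by field; rewrite ?pnatr_eq0.
rewrite big_bool => /(congr1 ( *%R 2%:R)); rewrite mulVKf ?pnatr_eq0 // => <-.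
by case: a; case: b; rewrite /= ?addr0 ?add0r.
Qed.

Lemma sic_sum_proj_pair a b a' b' :
  \sum_k sic_proj k a b * (sic_proj k a' b')^* =
  2%:R / 3%:R * (((a == a') && (b == b'))%:R + ((a == b) && (a' == b'))%:R).
Proof.
have sum_adj : \sum_k (sic_proj k a' b')^* = 2%:R * (a' == b')%:R.
  by rewrite -rmorph_sum sic_sum_proj rmorphM /= !conjC_nat.
have -> : ((a == b) && (a' == b'))%:R = (a == b)%:R * (a' == b')%:R :> C.
  by rewrite -natrM mulnb.
rewrite -(sic_resolution a b a' b').
under [in RHS]eq_bigr => k _ do rewrite mulrBl -[3%:R / 2%:R * _ * _]mulrA.
rewrite sumrB -!mulr_sumr sum_adj sic_sum_proj.
by field; rewrite ?pnatr_eq0.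
Qed.

Lemma conj_sic_proj k a b : (sic_proj k a b)^* = sic_proj k b a.
Proof. by rewrite /sic_proj rmorphM /= conjCK mulrC. Qed.

Lemma tphi_proj k u v : tphi phi k u * (tphi phi k v)^* = sic_proj k u v / 2%:R.
Proof.
have sqrt2K : sqrtC 2%:R * sqrtC 2%:R = 2%:R :> C by rewrite -expr2 sqrtCK.
rewrite /tphi rmorphM /= fmorphV /= (geC0_conj (x := sqrtC _)) ?sqrtC_ge0 ?ler0n //.
by rewrite mulrACA -invfM sqrt2K.
Qed.

(* Entrywise form of sum_k |tphi_k><tphi_k| (x) |tphi_k><tphi_k| = (SWAP + I) / 6. *)
Lemma tphi_design u v u' v' :
  \sum_k tphi phi k u * (tphi phi k v)^* * (tphi phi k u' * (tphi phi k v')^*) =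
  6%:R^-1 * (((u == v') && (u' == v))%:R + ((u == v) && (u' == v'))%:R).
Proof.
rewrite (eq_bigr (fun k => 4%:R^-1 * (sic_proj k u v * (sic_proj k v' u')^*)));
  last by move=> k _; rewrite !tphi_proj conj_sic_proj; field.
rewrite -mulr_sumr sic_sum_proj_pair [v == u']eq_sym [v' == u']eq_sym.
by field; rewrite ?pnatr_eq0.
Qed.
End SIC.

Section Qubits.
Variables (C : numClosedFieldType) (n : nat).
Implicit Types (A S : {set 'I_n}) (psi : bits n -> C) (x y : bits n).

Lemma glue_in A (a : bitsIn A) (c : bitsOut A) i (iA : i \in A) :
  glue a c i = a (exist _ i iA).
Proof.
rewrite ffunE; destruct (boolP (i \in A)) as [iA'|niA]; last by exfalso; rewrite iA in niA.
by congr (a _); apply: val_inj.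
Qed.

Lemma glue_out A (a : bitsIn A) (c : bitsOut A) i (niA : i \notin A) :
  glue a c i = c (exist _ i niA).
Proof.
rewrite ffunE; destruct (boolP (i \in A)) as [iA|niA']; first by exfalso; rewrite iA in niA.
by congr (c _); apply: val_inj.
Qed.

Lemma sum_bits_glue A (F : bits n -> C) :
  \sum_x F x = \sum_(a : bitsIn A) \sum_(c : bitsOut A) F (glue a c).
Proof.
rewrite pair_big /= (reindex (fun p : bitsIn A * bitsOut A => glue p.1 p.2)) //.
exists (fun x => ([ffun i => x (val i)], [ffun i => x (val i)])) => [[a c] _|x _].
  by congr pair; apply/ffunP => -[i Hi]; rewrite ffunE /=; [exact: glue_in | exact: glue_out].
apply/ffunP => i /=; case: (boolP (i \in A)) => Hi.
  by rewrite (glue_in _ _ Hi) ffunE.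
by rewrite (glue_out _ _ Hi) ffunE.
Qed.

Definition mix A x y : bits n := [ffun i => if i \in A then x i else y i].

Lemma mix_glue A (a b : bitsIn A) (c c' : bitsOut A) :
  mix A (glue a c') (glue b c) = glue a c.
Proof.
apply/ffunP => i; rewrite ffunE; case: (boolP (i \in A)) => Hi.
  by rewrite !(glue_in _ _ Hi).
by rewrite !(glue_out _ _ Hi).
Qed.

Definition tr_rho psi (K : bits n -> bits n -> C) : C :=
  \sum_x \sum_y psi y * (psi x)^* * K x y.

(* tr((rho (x) rho) K) for the two-copy operator K with entries
   K x y x' y' = <x x'|K|y y'>. *)
Definition tr_rho2 psi (K : bits n -> bits n -> bits n -> bits n -> C) : C :=
  \sum_x \sum_y \sum_x' \sum_y' psi y * (psi x)^* * (psi y' * (psi x')^*) * K x y x' y'.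

Lemma tr_rho_sqr psi K :
  tr_rho psi K ^+ 2 = tr_rho2 psi (fun x y x' y' => K x y * K x' y').
Proof.
rewrite expr2 /tr_rho big_distrl; apply: eq_bigr => x _.
rewrite big_distrl; apply: eq_bigr => y _.
rewrite big_distrr; apply: eq_bigr => x' _.
by rewrite big_distrr; apply: eq_bigr => y' _ /=; ring.
Qed.

Lemma eq_tr_rho2 psi K K' :
  (forall x y x' y', K x y x' y' = K' x y x' y') -> tr_rho2 psi K = tr_rho2 psi K'.
Proof. by move=> eqK; do 4!apply: eq_bigr => ? _; rewrite eqK. Qed.

Lemma tr_rho2_sum psi (I : finType) (P : pred I)
    (K : I -> bits n -> bits n -> bits n -> bits n -> C) :
  tr_rho2 psi (fun x y x' y' => \sum_(j | P j) K j x y x' y') =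
  \sum_(j | P j) tr_rho2 psi (K j).
Proof.
symmetry; rewrite /tr_rho2.
by do 4!(rewrite exchange_big; apply: eq_bigr => ? _); rewrite mulr_sumr.
Qed.

Lemma tr_rho2_scale psi c K :
  tr_rho2 psi (fun x y x' y' => c * K x y x' y') = c * tr_rho2 psi K.
Proof.
by rewrite /tr_rho2; do 4!(rewrite mulr_sumr; apply: eq_bigr => ? _); rewrite mulrCA.
Qed.

Definition swap_kernel A x y x' y' : C :=
  ((x == mix A y' y) && (x' == mix A y y'))%:R.

Lemma tr_rho2_swap psi A :
  tr_rho2 psi (swap_kernel A) =
  \sum_y \sum_y' psi y * psi y' * ((psi (mix A y' y))^* * (psi (mix A y y'))^*).
Proof.
have delta (F : bits n -> C) z : \sum_x F x * (x == z)%:R = F z.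
  by rewrite (bigD1 z) //= eqxx mulr1 big1 ?addr0 // => x /negbTE ->; rewrite mulr0.
rewrite /tr_rho2 exchange_big; apply: eq_bigr => y _ /=.
under eq_bigr => x _ do rewrite exchange_big.
rewrite exchange_big; apply: eq_bigr => y' _ /=.
transitivity (\sum_x \sum_x'
    (psi y * (psi x)^* * (x == mix A y' y)%:R) * (psi y' * (psi x')^* * (x' == mix A y y')%:R)).
  by do 2!apply: eq_bigr => ? _; rewrite /swap_kernel -mulnb natrM; ring.
by rewrite -big_distrlr /= !delta; ring.
Qed.

Lemma sum_reduced_sqr psi A :
  \sum_(a : bitsIn A) \sum_(b : bitsIn A) reduced psi a b * reduced psi b a =
  tr_rho2 psi (swap_kernel A).
Proof.
symmetry; rewrite tr_rho2_swap (sum_bits_glue A).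
under eq_bigr => a _ do under eq_bigr => c _ do rewrite (sum_bits_glue A).
under eq_bigr => a _ do rewrite exchange_big /=.
apply: eq_bigr => a _; apply: eq_bigr => b _.
rewrite /reduced big_distrl; apply: eq_bigr => c _; rewrite big_distrr.
by apply: eq_bigr => c' _ /=; rewrite !mix_glue; ring.
Qed.

Lemma purity_swap psi A :
  normalized psi -> purity psi A = tr_rho2 psi (swap_kernel A).
Proof.
rewrite /purity; case: eqP => [-> normed|_ _]; last exact: sum_reduced_sqr.
have mix0 u v : mix set0 u v = v by apply/ffunP => i; rewrite ffunE in_set0.
rewrite tr_rho2_swap -(mulr1 1) -{1}normed -{1}normed big_distrlr.
by do 2!apply: eq_bigr => ? _; rewrite /= !mix0; ring.
Qed.

Lemma swap_kernelE A x y x' y' :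
  swap_kernel A x y x' y' =
  \prod_i (if i \in A then ((x i == y' i) && (x' i == y i))%:R
           else ((x i == y i) && (x' i == y' i))%:R).
Proof.
rewrite (eq_bigr (fun i => ((x i == mix A y' y i) && (x' i == mix A y y' i))%:R));
  last by move=> i _; rewrite !ffunE; case: (i \in A).
rewrite prodr_natb /swap_kernel; congr (nat_of_bool _)%:R.
apply/andP/forallP => [[/eqP-> /eqP->] i | xx'E]; first by rewrite !eqxx.
by split; apply/eqP/ffunP => i; have /andP[/eqP ? /eqP ?] := xx'E i.
Qed.

Lemma sum_sic_op_pair (phi : 'I_4 -> bool -> C) S x y x' y' : is_SIC phi ->
  \sum_(q : {ffun {i : 'I_n | i \in S} -> 'I_4}) sic_op phi q x y * sic_op phi q x' y' =
  6%:R^-1 ^+ #|S| * \sum_(A in powerset S) swap_kernel A x y x' y'.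
Proof.
move=> sic; rewrite /sic_op.
under eq_bigr => q _ do rewrite mulrACA -!big_split /=.
rewrite -mulr_suml -(bigA_distr_bigA (fun (j : {i | i \in S}) k =>
  tphi phi k (x (val j)) * (tphi phi k (y (val j)))^* *
  (tphi phi k (x' (val j)) * (tphi phi k (y' (val j)))^*))) /=.
under eq_bigr => j _ do rewrite tphi_design //.
rewrite -(big_sub S (fun i => 6%:R^-1 * (((x i == y' i) && (x' i == y i))%:R +
                                        ((x i == y i) && (x' i == y' i))%:R))) /=.
rewrite big_split /= prodr_const -mulrA.
under [X in _ * (_ * X)]eq_bigr => i _ do rewrite -natrM mulnb.
rewrite prodD_powerset; congr (_ * _).
by apply: eq_bigr => A _; rewrite swap_kernelE.
Qed.

End Qubits.

Theorem corollary1 (C : numClosedFieldType) (n : nat)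
  (psi : {ffun 'I_n -> bool} -> C) (S : {set 'I_n})
  (phi : 'I_4 -> bool -> C) :
  normalized psi -> S != set0 -> is_SIC phi ->
  conc_ent psi S =
  1 - (3 ^+ #|S|)%:R *
      \sum_(q : {ffun {i : 'I_n | i \in S} -> 'I_4}) sic_prob psi phi q ^+ 2.
Proof.
move=> normed _ sic.
have -> : \sum_(q : {ffun {i : 'I_n | i \in S} -> 'I_4}) sic_prob psi phi q ^+ 2 =
    6%:R^-1 ^+ #|S| * \sum_(A in powerset S) purity psi A.
  under eq_bigr => q _ do rewrite /sic_prob -/(tr_rho psi (sic_op phi q)) tr_rho_sqr.
  rewrite -tr_rho2_sum (eq_tr_rho2 _ (fun x y x' y' => sum_sic_op_pair S x y x' y' sic)).
  rewrite tr_rho2_scale tr_rho2_sum; congr (_ * _).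
  by apply: eq_bigr => A _; rewrite purity_swap.
rewrite /conc_ent mulrA !natrX -exprVn -exprMn.
by congr (1 - (_ ^+ _) * _); field; rewrite ?pnatr_eq0.
Qed.
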